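(* Let $B$ be a non-abelian group, $H$ a finitely generated infinite group with fixed finite generating set $X=\{x_1,\dots,x_n\}$, $W=B\wr H$, and fix $a,b\in B$ with $ab\ne ba$. For $S\subseteq H$ define $\bar a,\bar b_S\in B^H$ by $\bar a(1)=a$, $\bar a(x)=1$ for $x\neq1$, and $\bar b_S(x)=b$ for $x\in S$, $\bar b_S(x)=1$ for $x\notin S$, and set $Y_S=(x_1,\dots,x_n,\bar a,\bar b_S)$. Let $S,T\in D_R(H)$ satisfy $S\cap \mathrm{Ball}_H(2r)=T\cap\mathrm{Ball}_H(2r)$ for some $r\in\mathbb N$. Then a word $w_S$ of length at most $r$ in the alphabet $Y_S^{\pm1}$ represents $1$ in $W$ if and only if the word $w_T$ in $Y_T^{\pm1}$ obtained from $w_S$ by replacing each occurrence of $\bar b_S^{\pm1}$ with $\bar b_T^{\pm1}$ represents $1$ in $W$.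
   Context: $B^H$ is the group of all functions $H\to B$ with pointwise multiplication; $B\wr H=B^H\rtimes H$ with $(hfh^{-1})(x)=f(h^{-1}x)$. $|h|_X$ denotes word length of $h\in H$ with respect to $X$ and $\mathrm{Ball}_H(m)=\{h\in H:|h|_X\le m\}$. $2^H$ is the space of all subsets of $H$ with the product topology; $H$ acts on it by right multiplication $S\mapsto Sh$, and $D_R(H)$ is the set of $S\subseteq H$ whose orbit $\{Sh:h\in H\}$ is dense in $2^H$. *)

From Stdlib Require Import List Arith ClassicalEpsilon.
Import ListNotations.
Set Implicit Arguments.
Unset Strict Implicit.

Record group := Group {
  carrier :> Type;
  gmul : carrier -> carrier -> carrier;
  ginv : carrier -> carrier;
  gone : carrier;
  gmulA : forall x y z, gmul x (gmul y z) = gmul (gmul x y) z;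
  gmul1g : forall x, gmul gone x = x;
  gmulg1 : forall x, gmul x gone = x;
  gmulVg : forall x, gmul (ginv x) x = gone;
  gmulgV : forall x, gmul x (ginv x) = gone
}.

Arguments gmul {g}. Arguments ginv {g}. Arguments gone {g}.

(* Evaluation of a word over a finite list X of elements of H and their
   inverses; a letter (i, true) is X_i, (i, false) is X_i^{-1}. *)
Definition letter_val (H : group) (X : list H) (l : nat * bool) : H :=
  if snd l then nth (fst l) X gone else ginv (nth (fst l) X gone).

Definition eval_wordH (H : group) (X : list H) (w : list (nat * bool)) : H :=
  fold_right (fun l acc => gmul (letter_val X l) acc) gone w.

Definition word_over (n : nat) (w : list (nat * bool)) : Prop :=
  Forall (fun l => fst l < n) w.

Definition generates (H : group) (X : list H) : Prop :=
  forall h : H, exists w, word_over (length X) w /\ eval_wordH X w = h.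

Definition infinite_group (H : group) : Prop :=
  forall l : list H, exists h : H, ~ In h l.

Definition non_abelian (B : group) : Prop :=
  exists x y : B, gmul x y <> gmul y x.

Definition in_ball (H : group) (X : list H) (m : nat) (h : H) : Prop :=
  exists w, word_over (length X) w /\ length w <= m /\ eval_wordH X w = h.

(* Subsets of H are elements of 2^H = H -> bool.  Right translate:
   x \in S h  iff  x h^{-1} \in S. *)
Definition rtrans (H : group) (S : H -> bool) (h : H) : H -> bool :=
  fun x => S (gmul x (ginv h)).

(* D_R(H): the orbit {S h} is dense in 2^H with the product topology, i.e.
   it meets every basic open set {P | P x = P0 x for all x in F}
   (F finite, P0 in 2^H). *)
Definition dense_orbit (H : group) (S : H -> bool) : Prop :=
  forall (F : list H) (P0 : H -> bool),
    exists h : H, forall x, In x F -> rtrans S h x = P0 x.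

Definition welt (B H : group) : Type := ((H -> B) * H)%type.

(* (f,h)(g,k) = (f . (h g h^{-1}), h k) with (h g h^{-1})(x) = g(h^{-1} x). *)
Definition wmul (B H : group) (u v : welt B H) : welt B H :=
  (fun x => gmul (fst u x) (fst v (gmul (ginv (snd u)) x)), gmul (snd u) (snd v)).

Definition wone (B H : group) : welt B H := (fun _ => gone, gone).

(* (f,h)^{-1} = (h^{-1} f^{-1} h, h^{-1}); (h^{-1} f^{-1} h)(x) = f(h x)^{-1}. *)
Definition winv (B H : group) (u : welt B H) : welt B H :=
  (fun x => ginv (fst u (gmul (snd u) x)), ginv (snd u)).

Definition delta1 (B H : group) (a : B) : H -> B :=
  fun x => if excluded_middle_informative (x = gone) then a else gone.

Definition indic (B H : group) (b : B) (S : H -> bool) : H -> B :=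
  fun x => if S x then b else gone.

Inductive ysym := ygen (i : nat) | ya | yb.

Definition ysym_val (B H : group) (X : list H) (a b : B) (S : H -> bool)
  (y : ysym) : welt B H :=
  match y with
  | ygen i => (fun _ => gone, nth i X gone)
  | ya => (@delta1 B H a, gone)
  | yb => (indic b S, gone)
  end.

(* A word in Y_S^{+-1}: a list of (symbol, sign); sign false = inverse. *)
Definition eval_wordW (B H : group) (X : list H) (a b : B) (S : H -> bool)
  (w : list (ysym * bool)) : welt B H :=
  fold_right (fun (l : ysym * bool) (acc : welt B H) =>
    @wmul B H (if snd l then ysym_val X a b S (fst l)
          else @winv B H (ysym_val X a b S (fst l))) acc) (wone B H) w.

Definition yword_ok (n : nat) (w : list (ysym * bool)) : Prop :=
  Forall (fun l => match fst l with ygen i => i < n | _ => True end) w.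

(* Equality in W = B^H x| H is pointwise equality of the B^H component and
   equality of the H component. *)
Definition represents_one (B H : group) (X : list H) (a b : B)
  (S : H -> bool) (w : list (ysym * bool)) : Prop :=
  let u := eval_wordW X a b S w in
  (forall x, fst u x = gone) /\ snd u = gone.

From Stdlib Require Import List Arith.
From Stdlib Require Import Lia Bool Classical ClassicalEpsilon.
Import ListNotations.
Set Implicit Arguments.
Unset Strict Implicit.

(* The B^H-component of the element represented by a word w, evaluated at x,
   is the product of the letter values at the points p^-1 x, where p runs over
   the positions of the cursor before each letter; these positions lie in
   Ball(|w|).  A letter value at y depends only on S y and on whether y = 1.
   So if x = p is itself a cursor position, only S on the set {p'^-1 p}, a
   subset of Ball(2r) where S and T agree, matters.  For any other x, density
   of the orbit of S in the infinite group H gives g, off the cursor path,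
   with S(p^-1 g) = T(p^-1 x) for all cursor positions p; then the
   T-component at x equals the S-component at g.  The H-component does not
   involve S at all. *)

Section GroupFacts.
Variable G : group.
Implicit Types x y z : G.

Lemma ginv_unique x y : gmul x y = gone -> y = ginv x.
Proof.
  intro e. rewrite <- (gmul1g y), <- (gmulVg x), <- gmulA, e. apply gmulg1.
Qed.

Lemma ginv1 : ginv (@gone G) = gone.
Proof. symmetry. apply ginv_unique, gmul1g. Qed.

Lemma ginvK x : ginv (ginv x) = x.
Proof. symmetry. apply ginv_unique, gmulVg. Qed.

Lemma ginvM x y : ginv (gmul x y) = gmul (ginv y) (ginv x).
Proof.
  symmetry. apply ginv_unique.
  rewrite gmulA, <- (gmulA x y), gmulgV, gmulg1. apply gmulgV.
Qed.

Lemma ginv_mul_eq x y z : gmul (ginv x) y = z <-> y = gmul x z.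
Proof.
  split; [intros <- | intros ->].
  - rewrite gmulA, gmulgV. symmetry. apply gmul1g.
  - rewrite gmulA, gmulVg. apply gmul1g.
Qed.

End GroupFacts.

Section WordMetric.
Variables (H : group) (X : list H).

Lemma eval_wordH_app w1 w2 :
  eval_wordH X (w1 ++ w2) = gmul (eval_wordH X w1) (eval_wordH X w2).
Proof.
  unfold eval_wordH. induction w1 as [|l w1 IH]; simpl.
  - symmetry. apply gmul1g.
  - rewrite IH. apply gmulA.
Qed.

Definition flip_letter (l : nat * bool) : nat * bool := (fst l, negb (snd l)).

Lemma eval_wordH_rev_flip w :
  eval_wordH X (rev (map flip_letter w)) = ginv (eval_wordH X w).
Proof.
  induction w as [|[i s] w IH]; simpl.
  - symmetry. apply ginv1.
  - rewrite eval_wordH_app, IH, ginvM. f_equal.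
    unfold eval_wordH, letter_val; simpl. rewrite gmulg1.
    destruct s; simpl; [reflexivity | symmetry; apply ginvK].
Qed.

Lemma in_ball_one m : in_ball X m gone.
Proof. exists []. repeat split; [constructor | simpl; lia]. Qed.

Lemma in_ball_mono m n h : m <= n -> in_ball X m h -> in_ball X n h.
Proof. intros le [w [ok [len e]]]. exists w. repeat split; auto. lia. Qed.

Lemma in_ball_mul m n g h :
  in_ball X m g -> in_ball X n h -> in_ball X (m + n) (gmul g h).
Proof.
  intros [v [okv [lenv ev]]] [w [okw [lenw ew]]]. exists (v ++ w). repeat split.
  - apply Forall_app; auto.
  - rewrite length_app. lia.
  - rewrite eval_wordH_app. congruence.
Qed.

Lemma in_ball_inv m h : in_ball X m h -> in_ball X m (ginv h).
Proof.
  intros [w [ok [len e]]]. exists (rev (map flip_letter w)). repeat split.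
  - apply Forall_rev, Forall_map. exact ok.
  - rewrite length_rev, length_map. exact len.
  - rewrite eval_wordH_rev_flip. congruence.
Qed.

Lemma in_ball_nth i : in_ball X 1 (nth i X gone).
Proof.
  destruct (Nat.lt_ge_cases i (length X)) as [lt | ge].
  - exists [(i, true)]. split; [| split].
    + constructor; [exact lt | constructor].
    + reflexivity.
    + apply gmulg1.
  - rewrite nth_overflow by exact ge. apply in_ball_one.
Qed.

End WordMetric.

Section WreathWords.
Variables (B H : group) (X : list H) (a b : B).
Implicit Types (S T : H -> bool) (l : ysym * bool) (w : list (ysym * bool)).

Definition yletter_val S l : welt B H :=
  if snd l then ysym_val X a b S (fst l) else winv (ysym_val X a b S (fst l)).

Definition ysym_top (y : ysym) : H :=
  match y with ygen i => nth i X gone | _ => gone end.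

Definition yletter_top l : H :=
  if snd l then ysym_top (fst l) else ginv (ysym_top (fst l)).

Lemma snd_yletter_val S l : snd (yletter_val S l) = yletter_top l.
Proof. destruct l as [[i| |] []]; reflexivity. Qed.

Lemma in_ball_yletter_top l : in_ball X 1 (yletter_top l).
Proof.
  assert (top : in_ball X 1 (ysym_top (fst l))).
  { destruct l as [[i| |] s]; simpl; [apply in_ball_nth | apply in_ball_one ..]. }
  unfold yletter_top. destruct (snd l); [| apply in_ball_inv]; exact top.
Qed.

Lemma fst_yletter_val_local S T l x x' :
  S x = T x' -> (x = gone <-> x' = gone) ->
  fst (yletter_val S l) x = fst (yletter_val T l) x'.
Proof.
  intros eST e1.
  destruct l as [[i| |] []]; simpl; rewrite ?gmul1g; try reflexivity;
    unfold delta1, indic; try rewrite eST; try reflexivity;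
    destruct (excluded_middle_informative (x = gone));
    destruct (excluded_middle_informative (x' = gone)); tauto.
Qed.

Lemma fst_eval_wordW_cons S l w x :
  fst (eval_wordW X a b S (l :: w)) x =
  gmul (fst (yletter_val S l) x)
       (fst (eval_wordW X a b S w) (gmul (ginv (yletter_top l)) x)).
Proof. rewrite <- (snd_yletter_val S l). reflexivity. Qed.

Lemma snd_eval_wordW S T w :
  snd (eval_wordW X a b S w) = snd (eval_wordW X a b T w).
Proof.
  induction w as [|l w IH]; [reflexivity |].
  change (gmul (snd (yletter_val S l)) (snd (eval_wordW X a b S w)) =
          gmul (snd (yletter_val T l)) (snd (eval_wordW X a b T w))).
  rewrite !snd_yletter_val, IH. reflexivity.
Qed.

Fixpoint cursor_path w : list H :=
  match w with
  | [] => []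
  | l :: w' => gone :: map (gmul (yletter_top l)) (cursor_path w')
  end.

Lemma cursor_path_in_ball w p : In p (cursor_path w) -> in_ball X (length w) p.
Proof.
  revert p. induction w as [|l w IH]; simpl; intros p hp; [contradiction |].
  destruct hp as [<- | hp]; [apply in_ball_one |].
  apply in_map_iff in hp as [p' [<- hp']].
  apply (in_ball_mul (m := 1)); [apply in_ball_yletter_top | auto].
Qed.

Lemma fst_eval_wordW_local S T w x x' :
  (forall p, In p (cursor_path w) ->
     S (gmul (ginv p) x) = T (gmul (ginv p) x') /\ (x = p <-> x' = p)) ->
  fst (eval_wordW X a b S w) x = fst (eval_wordW X a b T w) x'.
Proof.
  revert x x'. induction w as [|l w IH]; intros x x' loc; [reflexivity |].
  rewrite !fst_eval_wordW_cons. f_equal.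
  - destruct (loc gone (or_introl eq_refl)) as [eST e1].
    rewrite ginv1, !gmul1g in eST. apply fst_yletter_val_local; auto.
  - apply IH. intros p hp.
    assert (hp' : In (gmul (yletter_top l) p) (cursor_path (l :: w))).
    { right. apply in_map. exact hp. }
    destruct (loc _ hp') as [eST e1].
    rewrite ginvM, <- !gmulA in eST. rewrite !ginv_mul_eq. auto.
Qed.

End WreathWords.

Lemma dense_orbit_avoiding (H : group) (S : H -> bool) :
  infinite_group H -> dense_orbit S ->
  forall (L F : list H) (P0 : H -> bool),
    exists h, ~ In h L /\ forall y, In y F -> rtrans S h y = P0 y.
Proof.
  intros hinf hS L. induction L as [|q L IH]; intros F P0.
  - destruct (hS F P0) as [h hh]. exists h. auto.
  - destruct (hinf F) as [y hy].
    (* forcing the value at a fresh point y to differ from that of [rtrans S q] excludes h = q *)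
    set (P1 := fun z => if excluded_middle_informative (z = y)
                        then negb (rtrans S q y) else P0 z).
    destruct (IH (y :: F) P1) as [h [hL hh]]. exists h. split.
    + intros [<- | hin]; [| contradiction].
      specialize (hh y (or_introl eq_refl)). unfold P1 in hh.
      destruct (excluded_middle_informative (y = y)); [| congruence].
      symmetry in hh. exact (no_fixpoint_negb _ hh).
    + intros z hz. rewrite hh by (right; exact hz). unfold P1.
      destruct (excluded_middle_informative (z = y)); [congruence | reflexivity].
Qed.

Lemma fst_eval_wordW_trivial_transfer (B H : group) (X : list H) (a b : B)
  (S T : H -> bool) (w : list (ysym * bool)) :
  infinite_group H -> dense_orbit S ->
  (forall p p', In p (cursor_path X w) -> In p' (cursor_path X w) ->
     S (gmul (ginv p) p') = T (gmul (ginv p) p')) ->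
  (forall x, fst (eval_wordW X a b S w) x = gone) ->
  forall x, fst (eval_wordW X a b T w) x = gone.
Proof.
  intros hinf hS agree trivS x.
  destruct (classic (In x (cursor_path X w))) as [hx | hx].
  - rewrite <- (trivS x). symmetry. apply fst_eval_wordW_local. intros p hp.
    split; [apply agree | tauto]; assumption.
  - destruct (dense_orbit_avoiding hinf hS (map ginv (cursor_path X w))
                (map ginv (cursor_path X w)) (fun y => T (gmul y x)))
      as [h [hL hh]].
    rewrite <- (trivS (ginv h)). symmetry. apply fst_eval_wordW_local. intros p hp. split.
    + apply (hh (ginv p)). apply in_map. exact hp.
    + split; intros e; exfalso.
      * apply hL. rewrite <- (ginvK h), e. apply in_map. exact hp.
      * apply hx. rewrite e. exact hp.
Qed.

Theorem lemma3p5 (B H : group) (X : list H) (a b : B) (S T : H -> bool)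
  (r : nat)
  (hB : non_abelian B) (hgen : generates X) (hinf : infinite_group H)
  (hab : gmul a b <> gmul b a)
  (hS : dense_orbit S) (hT : dense_orbit T)
  (hST : forall h : H, in_ball X (2 * r) h -> S h = T h)
  (w : list (ysym * bool)) (hw : yword_ok (length X) w) (hlen : length w <= r) :
  represents_one X a b S w <-> represents_one X a b T w.
Proof.
  assert (agree : forall p p', In p (cursor_path X w) -> In p' (cursor_path X w) ->
                    S (gmul (ginv p) p') = T (gmul (ginv p) p')).
  { intros p p' hp hp'. apply hST, (in_ball_mono (m := length w + length w)); [lia |].
    apply in_ball_mul; [apply in_ball_inv |]; apply cursor_path_in_ball; assumption. }
  pose proof (snd_eval_wordW X a b S T w) as snd_eq.
  unfold represents_one; simpl.
  split; intros [trivf trivh]; split; try congruence.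
  - exact (fst_eval_wordW_trivial_transfer hinf hS agree trivf).
  - refine (fst_eval_wordW_trivial_transfer hinf hT _ trivf).
    intros p p' hp hp'. symmetry. apply agree; assumption.
Qed.
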